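(* Let $m$ be a positive integer, let $S=\mathbb{Q}[t^{\pm1}]/((t^2-3t+1)^m)$ viewed as an abelian group, and let $\Gamma_1=S\rtimes\langle\mu\rangle$, where $\mu$ generates an infinite cyclic group acting on $S$ by multiplication by $t$ (i.e.\ $\mu^{-1}s\mu=st$). Let $\mathcal{R}_1=(\mathbb{Q}\Gamma_1)(\mathbb{Q}[\Gamma_1,\Gamma_1]\setminus\{0\})^{-1}$ be the Ore localization. Then the ring $\mathcal{R}_1$ is simple, i.e.\ it has no two-sided ideals other than $0$ and $\mathcal{R}_1$.
   Context: $\mathcal{R}_1$ is isomorphic to the skew Laurent polynomial ring $\mathbb{K}_1[\mu^{\pm1}]$, where $\mathbb{K}_1$ is the (commutative) quotient field of $\mathbb{Z}[S]$, with $a\mu=\mu\alpha(a)$ for the automorphism $\alpha$ of $\mathbb{K}_1$ induced by multiplication by $t$ on $S$. *)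

From HB Require Import structures.
From mathcomp Require Import all_boot all_order all_algebra.
From mathcomp Require Import finmap.
Set Implicit Arguments. Unset Strict Implicit. Unset Printing Implicit Defensive.
Import Order.TTheory GRing.Theory Num.Theory.
Local Open Scope ring_scope.

Definition fpoly : {poly rat} := 'X^2 - 3%:P * 'X + 1.

(* S_m = Q[t]/(f^m), canonically isomorphic to Q[t^{+-1}]/(f^m) since t is
   invertible modulo f^m (f(0) = 1).  Its additive group is the group S. *)
Definition Sm (m : nat) := {poly %/ (fpoly ^+ m)}.

Definition tS (m : nat) : Sm m := 'qX.

(* Gamma_1 = S x| <mu> ; the pair (s, n) stands for s * mu^n,
   with mu^-1 s mu = s t, hence mu^n s = (t^-n s) mu^n. *)
Definition Gam (m : nat) := (Sm m * int)%type.

Definition gmul (m : nat) (x y : Gam m) : Gam m :=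
  (x.1 + tS m ^ (- x.2) * y.1, x.2 + y.2).
Definition ginv (m : nat) (x : Gam m) : Gam m :=
  (- (tS m ^ x.2 * x.1), - x.2).
Definition gone (m : nat) : Gam m := (0, 0).
Definition gmu (m : nat) : Gam m := (0, 1).
Definition gS (m : nat) (s : Sm m) : Gam m := (s, 0).

Definition gcomm (m : nat) (x y : Gam m) : Gam m :=
  gmul (ginv x) (gmul (ginv y) (gmul x y)).

Inductive in_comm_subgroup (m : nat) : Gam m -> Prop :=
| csg_one : in_comm_subgroup (gone m)
| csg_comm x y : in_comm_subgroup (gcomm x y)
| csg_inv x : in_comm_subgroup x -> in_comm_subgroup (ginv x)
| csg_mul x y : in_comm_subgroup x -> in_comm_subgroup y ->
                in_comm_subgroup (gmul x y).

Definition QGam (m : nat) := {fsfun Gam m -> rat with 0}.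

Definition in_QComm (m : nat) (a : QGam m) : Prop :=
  forall g, g \in finsupp a -> in_comm_subgroup g.

Definition gring_ext (m : nat) (R : unitAlgType rat) (rho : Gam m -> R)
  (a : QGam m) : R :=
  \sum_(g <- finsupp a) a g *: rho g.

(* R, with rho, is the (right) Ore localization
   (Q Gamma_1) (Q[Gamma_1,Gamma_1] \ {0})^-1 (b nonzero <-> finsupp b nonempty), i.e. a right ring of fractions:
   phi : Q Gamma_1 -> R is an injective Q-algebra homomorphism (induced by the
   group homomorphism rho), sending every nonzero element of Q[Gamma_1,Gamma_1]
   to a unit, and every element of R has the form phi(a) phi(b)^-1 with
   b in Q[Gamma_1,Gamma_1] \ {0}. *)
Definition is_Ore_localization_R1 (m : nat) (R : unitAlgType rat)
  (rho : Gam m -> R) : Prop :=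
  [/\ rho (gone m) = 1,
      (forall x y, rho (gmul x y) = rho x * rho y),
      injective (gring_ext rho),
      (forall b : QGam m, in_QComm b -> finsupp b != fset0 -> gring_ext rho b \is a GRing.unit)
    & (forall r : R, exists a b : QGam m,
          [/\ in_QComm b, finsupp b != fset0 & r = gring_ext rho a * (gring_ext rho b)^-1])].

Definition two_sided_ideal (R : pzRingType) (I : R -> Prop) : Prop :=
  [/\ I 0,
      (forall x y, I x -> I y -> I (x - y)),
      (forall r x, I x -> I (r * x))
    & (forall r x, I x -> I (x * r))].

Definition simple_ring (R : pzRingType) : Prop :=
  forall I : R -> Prop, two_sided_ideal I ->
    (forall x, I x -> x = 0) \/ (forall x, I x).

From HB Require Import structures.
From mathcomp Require Import all_boot all_order all_algebra.
From mathcomp Require Import finmap.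
From mathcomp Require Import ring lra zify.
From Stdlib Require Import Classical.
Set Implicit Arguments. Unset Strict Implicit. Unset Printing Implicit Defensive.
Import Order.TTheory GRing.Theory Num.Theory.
Local Open Scope ring_scope.
Import Pdiv.CommonRing.

(* A nonzero two-sided ideal contains [gring_ext rho a] for some nonzero [a]
   in Q Gamma_1 (clear the Ore denominator).  Conjugating [a] by an element of
   S and subtracting a left translate of [a] by another one removes the lowest
   mu-degree [n0] of [a] without leaving the ideal.  If that difference is
   zero, each fibre of [a] in a degree [n <> n0] is invariant under translation
   by [t^-n - t^-n0], which is nonzero because no root of [t^2 - 3 t + 1] is a
   root of unity; a finitely supported function with that invariance vanishes,
   so [a] lives in degree [n0] alone.  Either way we end with a nonzero element
   of [Q[S] mu^n0], a unit since [Q[S]] lies in [Q[Gamma_1, Gamma_1]]. *)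

Lemma size_fpoly_tail : (size (- 3%:P * 'X + 1 : {poly rat})%R < 3)%N.
Proof.
rewrite (leq_ltn_trans (size_polyD _ _)) // size_polyC gtn_max /=.
rewrite -polyCN (leq_ltn_trans (size_mul_leq _ _)) // size_polyX size_polyC.
by case: eqP.
Qed.

Lemma fpolyE : fpoly = 'X^2 + (- 3%:P * 'X + 1).
Proof. by rewrite /fpoly addrA mulNr. Qed.

Lemma size_fpoly : size fpoly = 3%N.
Proof. by rewrite fpolyE size_addl size_polyXn // size_fpoly_tail. Qed.

Lemma fpoly_monic : fpoly \is monic.
Proof.
by rewrite fpolyE monicE lead_coefDl ?lead_coefXn // size_polyXn size_fpoly_tail.
Qed.

Lemma nilpotent_unit1B (R : comUnitRingType) (x : R) n :
  x ^+ n = 0 -> 1 - x \is a GRing.unit.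
Proof.
move=> xn0; have := subrX1 x n; rewrite xn0 sub0r => /(congr1 -%R).
rewrite opprK -mulNr opprB => Ex.
by apply/unitrP; exists (\sum_(i < n) x ^+ i); rewrite mulrC -Ex.
Qed.

Lemma in_qpoly_fpoly (h : {poly rat}) :
  in_qpoly h fpoly = 'qX ^+ 2 - 3 * 'qX + 1.
Proof.
have qpoly3 : in_qpoly h 3%:P = 3.
  by rewrite -(rmorph_nat (in_qpoly h)); congr (in_qpoly _ _); rewrite polyC_natr.
by rewrite /fpoly rmorphD rmorphB !rmorphM rmorph1 /= qpoly3 expr2.
Qed.

(* Invariant of the remainders: [X (a X + b) = a f + (3 a + b) X - a]. *)
Lemma Xn_fpoly_remainder d : exists q (a b : rat),
  'X^(d.+1) = q * fpoly + (a%:P * 'X + b%:P) /\ 0 < a /\ - a <= b.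
Proof.
elim: d => [|d [q [a [b [E [a_gt0 ab]]]]]].
  by exists 0, 1, 0; rewrite mul0r add0r mul1r addr0 expr1; split => //; lra.
exists ('X * q + a%:P), (3 * a + b), (- a); split; last by split; lra.
by rewrite exprS E /fpoly !polyCD !polyCM polyCN; ring.
Qed.

Lemma fpoly_ndvd_Xn_sub1 d : ~~ (fpoly %| 'X^(d.+1) - 1).
Proof.
have [q [a [b [-> [a_gt0 _]]]]] := Xn_fpoly_remainder d.
rewrite -addrA dvdp_addr ?dvdp_mull //.
have r_neq0 : a%:P * 'X + b%:P - 1 != 0 :> {poly rat}.
  apply: contraTneq a_gt0 => /(congr1 (fun p : {poly rat} => p`_1)).
  by rewrite !coefE /= mulr1 addr0 subr0 => ->; rewrite ltxx.
rewrite gtNdvdp // size_fpoly -addrA -polyC1 -polyCB.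
rewrite (leq_ltn_trans (size_polyD _ _)) // size_polyC gtn_max.
have size_aX : (size (a%:P * 'X : {poly rat})%R <= 2)%N.
  by rewrite mul_polyC (leq_trans (size_scale_leq _ _)) ?size_polyX.
by rewrite (leq_ltn_trans size_aX) //=; case: (_ != 0).
Qed.

Section QuotientRing.

Variables (m : nat) (m_gt0 : (0 < m)%N).

Let mk_monic_fpolyX : mk_monic (fpoly ^+ m) = fpoly ^+ m :> {poly rat}.
Proof.
rewrite /mk_monic monic_exp ?fpoly_monic // andbT.
have := size_exp fpoly m; rewrite size_fpoly /=.
by case: (size _) => [|[|n]] //=; case: m m_gt0.
Qed.

Lemma in_qpoly_eq0 (p : {poly rat}) :
  (in_qpoly (fpoly ^+ m) p == 0) = (fpoly ^+ m %| p).
Proof.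
apply/eqP/idP => [/(congr1 val)|]; rewrite /= ?mk_monic_fpolyX.
  by move/rmodp_eq0P; rewrite -dvdpE.
by rewrite dvdpE => /rmodp_eq0P E; apply/val_inj; rewrite /= mk_monic_fpolyX.
Qed.

Let fS := tS m ^+ 2 - 3 * tS m + 1.

Let fS_nilpotent : fS ^+ m = 0.
Proof.
rewrite /fS -in_qpoly_fpoly.
by apply/eqP; rewrite -rmorphXn in_qpoly_eq0 dvdpp.
Qed.

Lemma tS_unit : tS m \is a GRing.unit.
Proof.
have : tS m * (3 - tS m) \is a GRing.unit.
  rewrite (_ : _ * _ = 1 - fS); last by rewrite /fS; ring.
  exact: nilpotent_unit1B fS_nilpotent.
by rewrite unitrM => /andP[].
Qed.

Lemma tS_sub1_unit : tS m - 1 \is a GRing.unit.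
Proof.
have : (tS m - 1) * (tS m - 2) \is a GRing.unit.
  rewrite (_ : _ * _ = 1 - - fS); last by rewrite /fS; ring.
  by apply: (@nilpotent_unit1B _ _ m); rewrite exprNn fS_nilpotent mulr0.
by rewrite unitrM => /andP[].
Qed.

Lemma tS_expS_neq1 d : tS m ^+ d.+1 != 1.
Proof.
rewrite -subr_eq0.
have -> : tS m ^+ d.+1 - 1 = in_qpoly (fpoly ^+ m) ('X^(d.+1) - 1).
  by rewrite rmorphB rmorph1 rmorphXn.
rewrite in_qpoly_eq0; apply: contra (fpoly_ndvd_Xn_sub1 d).
by apply: dvdp_trans; rewrite dvdp_exp ?dvdpp.
Qed.

Lemma tS_expz_eq1 (z : int) : tS m ^ z = 1 -> z = 0.
Proof.
case: z => [[|d]|d] //= => [|/eqP]; first by move/eqP; rewrite (negPf (tS_expS_neq1 d)).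
by rewrite invr_eq1 (negPf (tS_expS_neq1 d)).
Qed.

Lemma tS_expz_inj : injective (fun z : int => tS m ^ z).
Proof.
move=> z1 z2 /= E; apply/eqP; rewrite -subr_eq0; apply/eqP/tS_expz_eq1.
by rewrite exprzDr ?tS_unit // E -exprzDr ?tS_unit // subrr.
Qed.

End QuotientRing.

Section Group.

Variables (m : nat) (m_gt0 : (0 < m)%N).

Let tS_unit := tS_unit m_gt0.

Lemma gmulA : associative (@gmul m).
Proof.
move=> [x1 x2] [y1 y2] [z1 z2]; rewrite /gmul /=; congr (_, _); last exact: addrA.
by rewrite opprD exprzDr // mulrDr mulrA addrA.
Qed.

Lemma gmul1 : right_id (gone m) (@gmul m).
Proof. by move=> [x1 x2]; rewrite /gmul /= mulr0 !addr0. Qed.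

Lemma gmul1l : left_id (gone m) (@gmul m).
Proof. by move=> [x1 x2]; rewrite /gmul /gone /= oppr0 expr0z mul1r !add0r. Qed.

Lemma gmulV x : gmul x (ginv x) = gone m.
Proof.
case: x => s n; rewrite /gmul /ginv /gone /=; congr (_, _); last exact: subrr.
by rewrite mulrN mulrA -exprzDr // addNr expr0z mul1r subrr.
Qed.

Lemma gmulVl x : gmul (ginv x) x = gone m.
Proof.
case: x => s n; rewrite /gmul /ginv /gone /=; congr (_, _); last exact: addNr.
by rewrite opprK addNr.
Qed.

Definition gtranslate (l r x : Gam m) : Gam m := gmul (gmul l x) r.

Lemma gtranslateK l r : cancel (gtranslate l r) (gtranslate (ginv l) (ginv r)).
Proof.
by move=> x; rewrite /gtranslate !gmulA gmulVl gmul1l -gmulA gmulV gmul1.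
Qed.

Lemma gtranslateVK l r : cancel (gtranslate (ginv l) (ginv r)) (gtranslate l r).
Proof.
by move=> x; rewrite /gtranslate !gmulA gmulV gmul1l -gmulA gmulVl gmul1.
Qed.

Lemma S_in_comm_subgroup (s : Sm m) : in_comm_subgroup (gS s).
Proof.
have -> : gS s = gcomm (gS ((tS m - 1)^-1 * s)) (gmu m).
  rewrite /gcomm /gmul /ginv /gmu /gS /=; congr (_, _).
  rewrite !mulr0 !oppr0 !addr0 opprK expr0z expr1z.
  have tS_sub1K : (tS m - 1) * (tS m - 1)^-1 = 1 by rewrite mulrV ?tS_sub1_unit.
  by rewrite -[LHS]mul1r -{1}tS_sub1K; ring.
exact: csg_comm.
Qed.

End Group.

Lemma natmul_inj (F : numFieldType) (V : lmodType F) (w : V) :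
  w != 0 -> injective (GRing.natmul w).
Proof.
move=> w_neq0 i j wij; apply/eqP; rewrite -(eqr_nat F) -subr_eq0.
have : (i%:R - j%:R : F) *: w == 0 by rewrite scalerBl !scaler_nat wij subrr.
by rewrite scaler_eq0 (negPf w_neq0) orbF.
Qed.

Lemma fsfun_iter_invariant (K : choiceType) (V : eqType) (v0 : V)
    (a : {fsfun K -> V with v0}) (f : K -> K) x :
  (forall y, a (f y) = a y) -> injective (fun k => iter k f x) -> a x = v0.
Proof.
move=> a_f orbit_inj; apply/eqP; rewrite -memNfinsupp; apply/negP => x_supp.
have orbit_supp k : iter k f x \in finsupp a.
  by elim: k => // k IH; rewrite mem_finsupp iterS a_f -mem_finsupp.
pose s := [seq iter k f x | k <- iota 0 (#|` finsupp a|).+1].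
have s_uniq : uniq s by rewrite map_inj_uniq ?iota_uniq.
have s_supp : {subset s <= finsupp a} by move=> y /mapP[k _ ->].
have := uniq_leq_size s_uniq s_supp.
by rewrite size_map size_iota ltnn.
Qed.

Open Scope fset_scope.

Section GroupAlgebra.

Variables (m : nat) (m_gt0 : (0 < m)%N).

Definition qtranslate (l r : Gam m) (a : QGam m) : QGam m :=
  [fsfun g in [fset gtranslate l r x | x in finsupp a] =>
     a (gtranslate (ginv l) (ginv r) g)].

Definition qsub (a b : QGam m) : QGam m :=
  [fsfun g in finsupp a `|` finsupp b => a g - b g].

Lemma qtranslateE l r a g : qtranslate l r a g = a (gtranslate (ginv l) (ginv r) g).
Proof.
rewrite fsfun_fun; case: imfsetP => // g_out; rewrite fsfun_dflt //.
apply: contra_notN g_out => supp.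
by exists (gtranslate (ginv l) (ginv r) g); rewrite ?gtranslateVK.
Qed.

Lemma finsupp_qtranslate l r a :
  finsupp (qtranslate l r a) = [fset gtranslate l r x | x in finsupp a].
Proof.
apply/fsetP => g; rewrite mem_finsupp qtranslateE -mem_finsupp.
apply/idP/imfsetP => [supp|[x supp ->]]; last by rewrite gtranslateK.
by exists (gtranslate (ginv l) (ginv r) g); rewrite ?gtranslateVK.
Qed.

Lemma qsubE a b g : qsub a b g = a g - b g.
Proof.
rewrite fsfun_fun in_fsetU !mem_finsupp; case: ifPn => //.
by rewrite negb_or !negbK => /andP[/eqP-> /eqP->]; rewrite subrr.
Qed.

Lemma finsupp_qsub a b : finsupp (qsub a b) `<=` finsupp a `|` finsupp b.
Proof.
apply/fsubsetP => g; rewrite mem_finsupp qsubE in_fsetU !mem_finsupp.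
by apply: contraR; rewrite negb_or !negbK => /andP[/eqP-> /eqP->]; rewrite subrr.
Qed.

Variables (R : unitAlgType rat) (rho : Gam m -> R).

Lemma gring_ext_supp (F : {fset Gam m}) a :
  finsupp a `<=` F -> gring_ext rho a = \sum_(g <- F) a g *: rho g.
Proof.
move=> supp_F; apply: big_fset_incl => // g _.
by rewrite memNfinsupp => /eqP->; rewrite scale0r.
Qed.

Lemma gring_ext_qsub a b : gring_ext rho (qsub a b) = gring_ext rho a - gring_ext rho b.
Proof.
rewrite !(@gring_ext_supp (finsupp a `|` finsupp b))
  ?finsupp_qsub ?fsubsetUl ?fsubsetUr // -sumrB.
by apply: eq_bigr => g _; rewrite qsubE scalerBl.
Qed.

Hypothesis rhoM : forall x y, rho (gmul x y) = rho x * rho y.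

Lemma gring_ext_qtranslate l r a :
  gring_ext rho (qtranslate l r a) = rho l * gring_ext rho a * rho r.
Proof.
rewrite /gring_ext finsupp_qtranslate big_imfset /=; last first.
  by move=> x y _ _; apply: (can_inj (gtranslateK m_gt0 l r)).
rewrite mulr_sumr mulr_suml; apply: eq_bigr => x _.
by rewrite qtranslateE gtranslateK // /gtranslate !rhoM -scalerAr -scalerAl.
Qed.

End GroupAlgebra.

Close Scope fset_scope.

Section DegreeReduction.

Variables (m : nat) (m_gt0 : (0 < m)%N).

Definition degrees_within (a : QGam m) (lo hi : int) : Prop :=
  forall g, g \in finsupp a -> lo <= g.2 <= hi.

(* [h^-1 a h - k a] for [h = (1, 0)] and [k = (t^-n0 - 1, 0)]: both
   translates move the fibre of degree [n0] by the same amount. *)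
Definition kill_degree (n0 : int) (a : QGam m) : QGam m :=
  qsub (qtranslate (ginv (gS 1)) (gS 1) a)
       (qtranslate (gS (tS m ^ (- n0) - 1)) (gone m) a).

Lemma kill_degreeE n0 a g : kill_degree n0 a g =
  a (g.1 + 1 - tS m ^ (- g.2), g.2) - a (g.1 + 1 - tS m ^ (- n0), g.2).
Proof.
rewrite qsubE !qtranslateE //; case: g => s n /=.
rewrite /gtranslate /gmul /ginv /gS /gone /= !oppr0 !expr0z !mul1r !addr0 add0r opprK.
by congr (a (_, _) - a (_, _)); ring.
Qed.

Lemma degrees_kill_degree n0 d a : degrees_within a n0 (n0 + d.+1) ->
  degrees_within (kill_degree n0 a) (n0 + 1) (n0 + 1 + d).
Proof.
move=> a_deg g; rewrite mem_finsupp kill_degreeE => kill_neq0.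
have g2_neq_n0 : g.2 != n0 by apply: contraNneq kill_neq0 => ->; rewrite subrr.
have [x x_supp x2] : exists2 x, x \in finsupp a & x.2 = g.2.
  have [a_eq0|a_neq0] := eqVneq (a (g.1 + 1 - tS m ^ (- g.2), g.2)) 0.
    exists (g.1 + 1 - tS m ^ (- n0), g.2) => //.
    by move: kill_neq0; rewrite a_eq0 sub0r oppr_eq0 mem_finsupp.
  by exists (g.1 + 1 - tS m ^ (- g.2), g.2); rewrite ?mem_finsupp.
by move/eqP: g2_neq_n0; move: (a_deg x x_supp); rewrite x2; lia.
Qed.

Lemma kill_degree_eq0 n0 a :
  finsupp (kill_degree n0 a) = fset0 -> degrees_within a n0 n0.
Proof.
move=> kill0 x x_supp; rewrite -eq_le; apply: contraTT x_supp => x2_neq_n0.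
pose f (y : Gam m) : Gam m := (y.1 + (tS m ^ (- y.2) - tS m ^ (- n0)), y.2).
have a_f y : a (f y) = a y.
  have : kill_degree n0 a (y.1 - 1 + tS m ^ (- y.2), y.2) = 0.
    by rewrite fsfun_dflt // kill0.
  rewrite kill_degreeE => /eqP; rewrite subr_eq0 => /eqP E.
  rewrite /f (_ : (y.1 + _, _) = (y.1 - 1 + tS m ^ (- y.2) + 1 - tS m ^ (- n0), y.2)).
    by rewrite -E; case: y {E} => s n /=; congr (a (_, _)); ring.
  by congr (_, _); ring.
have iter_f k : iter k f x = (x.1 + (tS m ^ (- x.2) - tS m ^ (- n0)) *+ k, x.2).
  elim: k => [|k IH]; first by rewrite addr0 -surjective_pairing.
  by rewrite iterS IH /f /= mulrS; congr (_, _); ring.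
rewrite memNfinsupp; apply/eqP/(fsfun_iter_invariant a_f) => i j /=; rewrite !iter_f.
move=> /(congr1 fst)/addrI; apply: natmul_inj; rewrite subr_eq0.
by apply: contra x2_neq_n0 => /eqP/(tS_expz_inj m_gt0)/oppr_inj->.
Qed.

End DegreeReduction.

Lemma two_sided_ideal_unit (R : unitRingType) (I : R -> Prop) u :
  two_sided_ideal I -> I u -> u \is a GRing.unit -> forall x, I x.
Proof.
case=> _ _ IL IR Iu u_unit x.
by rewrite -[x]mulr1 -(mulVr u_unit) mulrA; apply: IL.
Qed.

Section Simplicity.

Variables (m : nat) (m_gt0 : (0 < m)%N) (R : unitAlgType rat) (rho : Gam m -> R).
Hypotheses (rho1 : rho (gone m) = 1)
  (rhoM : forall x y, rho (gmul x y) = rho x * rho y)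
  (comm_unit : forall b : QGam m, in_QComm b -> finsupp b != fset0 ->
     gring_ext rho b \is a GRing.unit).
Variables (I : R -> Prop) (I_ideal : two_sided_ideal I).

Lemma rho_unit g : rho g \is a GRing.unit.
Proof. by apply/unitrP; exists (rho (ginv g)); rewrite -!rhoM gmulV // gmulVl rho1. Qed.

Lemma gring_ext_unit_single_degree n0 a : finsupp a != fset0 ->
  degrees_within a n0 n0 -> gring_ext rho a \is a GRing.unit.
Proof.
move=> a_neq0 a_deg; pose shift : Gam m := (0, - n0).
have : gring_ext rho (qtranslate (gone m) shift a) \is a GRing.unit.
  apply: comm_unit => [g|]; rewrite finsupp_qtranslate //; last first.
    case/fset0Pn: a_neq0 => x x_supp; apply/fset0Pn.
    by exists (gtranslate (gone m) shift x); apply/imfsetP; exists x.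
  case/imfsetP => x x_supp ->; have /andP[x2_ge x2_le] := a_deg x x_supp.
  have -> : gtranslate (gone m) shift x = gS x.1.
    rewrite /gtranslate gmul1l /gmul /gS /= mulr0 addr0; congr (_, _).
    by apply/eqP; rewrite subr_eq0 eq_le x2_ge x2_le.
  exact: S_in_comm_subgroup.
by rewrite gring_ext_qtranslate // rho1 mul1r unitrMl ?rho_unit.
Qed.

Lemma ideal_kill_degree n0 a :
  I (gring_ext rho a) -> I (gring_ext rho (kill_degree n0 a)).
Proof.
case: I_ideal => _ IB IL IR Ia.
by rewrite gring_ext_qsub !gring_ext_qtranslate //; apply/IB; apply/IR/IL.
Qed.

Lemma ideal_full_of_degrees_within d n0 a : finsupp a != fset0 ->
  I (gring_ext rho a) -> degrees_within a n0 (n0 + d%:Z) -> forall x, I x.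
Proof.
elim: d n0 a => [|d IH] n0 a a_neq0 Ia a_deg.
  apply: two_sided_ideal_unit Ia _ => //.
  by move: a_deg; rewrite addr0 => /(gring_ext_unit_single_degree a_neq0).
have [kill0|kill_neq0] := eqVneq (finsupp (kill_degree n0 a)) fset0.
  apply: two_sided_ideal_unit Ia _ => //.
  exact: (gring_ext_unit_single_degree a_neq0 (kill_degree_eq0 m_gt0 kill0)).
apply: (IH (n0 + 1) _ kill_neq0 (ideal_kill_degree n0 Ia)).
exact: degrees_kill_degree.
Qed.

End Simplicity.

Theorem proposition4p2 (m : nat) (m_gt0 : (0 < m)%N)
  (R : unitAlgType rat) (rho : Gam m -> R) :
  is_Ore_localization_R1 rho -> simple_ring R.
Proof.
move=> [rho1 rhoM _ comm_unit fraction] I I_ideal.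
have [[x [Ix x_neq0]]|I0] := classic (exists x, I x /\ x <> 0); last first.
  by left => x Ix; apply: NNPP => x_neq0; apply: I0; exists x.
right; have [a [b [b_comm b_neq0 xE]]] := fraction x.
have Ia : I (gring_ext rho a).
  case: (I_ideal) => _ _ _ IR.
  by have := IR (gring_ext rho b) _ Ix; rewrite xE divrK ?comm_unit.
have a_neq0 : finsupp a != fset0.
  apply: contra_notN x_neq0 => /eqP a0.
  by rewrite xE /gring_ext a0 big_seq_fset0 mul0r.
pose N := \max_(g <- finsupp a) `|g.2|%N.
apply: (ideal_full_of_degrees_within m_gt0 rho1 rhoM comm_unit I_ideal
  (d := (N + N)%N) (n0 := - N%:Z) a_neq0 Ia) => g g_supp.
have := @leq_bigmax_seq _ _ _ (fun g : Gam m => `|g.2|%N) g g_supp isT.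
rewrite -/N; move: g.2 => z bound; apply/andP; split; lia.
Qed.
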